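(* Let $V$ be a finite-dimensional vector space over an algebraically closed field $\mathbf{k}$ of characteristic $p$, of dimension $\mathbf{n}\ge3$, equipped with a bilinear form $(,)$ and a quadratic form $Q$ such that either (i) $Q=0$, $(x,x)=0$ for all $x$, and $V^\perp=0$; or (ii) $Q\ne0$, $(x,y)=Q(x+y)-Q(x)-Q(y)$ for all $x,y$, and $Q|_{V^\perp}$ is injective. Let $\kappa\in\{0,1\}$ with $\mathbf{n}-\kappa$ even, $n=(\mathbf{n}-\kappa)/2$. Let $p_1\ge\dots\ge p_\sigma\ge1$ be integers with sum $n$, and if $\kappa=1$ set $p_{\sigma+1}=1/2$. Let $g\in Is(V)$ and let $(w^t_i)$ be a $(g,p_* )$-adapted collection. Let $e\le f$ in $[1,\sigma+\kappa]$ and assume that the subspace $\mathcal{W}_{e,f}$ spanned by $\{w^x_i;\ x\in[e,f],\ i\in[0,2p_x-1]\}$ is $g$-stable. Then the radical of $(,)|_{\mathcal{W}_{e,f}}$ is $0$, unless $\kappa=1$, $f=\sigma+1$ and $p=2$, in which case this radical equals $V^\perp$.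
   Context: $V^\perp=\{x\in V;(x,V)=0\}$. $Is(V)$ is the group of $g\in GL(V)$ with $(gx,gy)=(x,y)$ and $Q(gx)=Q(x)$ for all $x,y$. A collection $w^t_i\in V$ ($t\in[1,\sigma+\kappa]$, $i\in\mathbb{Z}$) is $(g,p_* )$-adapted if: (a) $w^t_{i+1}=gw^t_i$; (b) for $t\in[1,\sigma]$, $(w^t_i,w^t_j)=0$ if $|i-j|<p_t$ and $=1$ if $j-i=p_t$; (c) $(w^t_i,w^r_j)=0$ if $0\le i-j+p_r<2p_t$ and $1\le t<r\le\sigma$; (d) if $\kappa=1$, $(w^{\sigma+1}_i,w^{\sigma+1}_i)=2$; (e) if $\kappa=1$, $(w^t_i,w^{\sigma+1}_j)=0$ whenever $0\le i-j<2p_t$, $1\le t\le\sigma$; (f) $Q(w^t_i)=0$ for $t\in[1,\sigma]$, and $Q(w^{\sigma+1}_i)=1$ if $\kappa=1$. *)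

From HB Require Import structures.
From mathcomp Require Import all_boot all_order all_algebra.
Set Implicit Arguments. Unset Strict Implicit. Unset Printing Implicit Defensive.
Import Order.TTheory GRing.Theory Num.Theory.
Local Open Scope ring_scope.

Section Defs.
Variables (k : fieldType) (nn : nat).
Local Notation V := 'rV[k]_nn.

Definition bilinear_form (B : V -> V -> k) : Prop :=
  (forall (a : k) (x1 x2 y : V), B (a *: x1 + x2) y = a * B x1 y + B x2 y) /\
  (forall (a : k) (x y1 y2 : V), B x (a *: y1 + y2) = a * B x y1 + B x y2).

Definition quadratic_form (Q : V -> k) : Prop :=
  (forall (a : k) (x : V), Q (a *: x) = a ^+ 2 * Q x) /\
  bilinear_form (fun x y => Q (x + y) - Q x - Q y).

Definition in_perp (B : V -> V -> k) (x : V) : Prop := forall y : V, B x y = 0.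

(** g in Is(V) (g is linear by its type) *)
Definition is_isometry (B : V -> V -> k) (Q : V -> k) (g : V -> V) : Prop :=
  bijective g /\ (forall x y, B (g x) (g y) = B x y) /\ (forall x, Q (g x) = Q x).

(** twice p_t, with the convention p_{sigma+1} = 1/2 (so 2 p_{sigma+1} = 1) *)
Definition twop (p : nat -> nat) (sigma t : nat) : nat :=
  if (t <= sigma)%N then (2 * p t)%N else 1%N.

Definition adapted (B : V -> V -> k) (Q : V -> k) (g : V -> V)
    (p : nat -> nat) (sigma kappa : nat) (w : nat -> int -> V) : Prop :=
      (forall t i, (1 <= t <= sigma + kappa)%N -> w t (i + 1) = g (w t i)) /\
      (forall t (i j : int), (1 <= t <= sigma)%N ->
          (`|i - j| < (p t)%:Z -> B (w t i) (w t j) = 0) /\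
          (j - i = (p t)%:Z -> B (w t i) (w t j) = 1)) /\
      (forall t r (i j : int), (1 <= t)%N -> (t < r)%N -> (r <= sigma)%N ->
          0 <= i - j + (p r)%:Z -> i - j + (p r)%:Z < (2 * p t)%:Z ->
          B (w t i) (w r j) = 0) /\
      (kappa = 1%N -> forall i, B (w sigma.+1 i) (w sigma.+1 i) = 2) /\
      (kappa = 1%N -> forall t (i j : int), (1 <= t <= sigma)%N ->
          0 <= i - j -> i - j < (2 * p t)%:Z -> B (w t i) (w sigma.+1 j) = 0) /\
      (forall t i, (1 <= t <= sigma)%N -> Q (w t i) = 0) /\
      (kappa = 1%N -> forall i, Q (w sigma.+1 i) = 1).

Definition W_ef (p : nat -> nat) (sigma : nat) (w : nat -> int -> V) (e f : nat)
  : {vspace V} :=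
  <<[seq w x (Posz i) | x <- iota e (f - e).+1, i <- iota 0 (twop p sigma x)]>>%VS.

End Defs.

(** Write u := w^{sigma+1}_0. The space W_{e,f} is spanned by the w^t_i with i < p_t and
    t <= min(f, sigma), by their partners w^t_{i+p_t}, and by u when f = sigma + 1. Ranking the
    pairs (t, i) lexicographically by (i - p_t, -t), axioms (b) and (c) make the pairing between
    the w^t_i and their partners unitriangular, while the partners are mutually orthogonal and,
    by (e), orthogonal to u. Solving the two triangular systems shows that a vector of the radical
    has no component on the w^t_i nor on their partners: it is a multiple c u, and (u, u) = 2
    forces c = 0 outside characteristic 2. In characteristic 2, the same triangularity makes the
    2n + 1 vectors spanning W_{1,sigma+1} independent, hence a basis of V, so u lies in V^perp;
    since Q(a u) = a^2 and Q is injective on V^perp, every vector of V^perp is then a multiple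
    of u. *)

From HB Require Import structures.
From mathcomp Require Import all_boot all_order all_algebra zify.
Import Order.TTheory GRing.Theory Num.Theory.
Local Open Scope ring_scope.
Set Implicit Arguments.
Unset Strict Implicit.
Unset Printing Implicit Defensive.

Lemma mem_pair_allpairs (S T : eqType) (s : seq S) (t : S -> seq T) (x : S) (y : T) :
  ((x, y) \in [seq (a, b) | a <- s, b <- t a]) = (x \in s) && (y \in t x).
Proof.
apply/allpairsPdep/andP => [[a [b [a_s b_t [-> ->]]]] // | [xs yt]].
by exists x, y.
Qed.

Section SpanCoef.
Variables (K : fieldType) (vT : vectType K) (I : eqType) (v : I -> vT).

Lemma memv_span_map_sum (s : seq I) x :
  uniq s -> x \in <<map v s>>%VS -> exists c : I -> K, x = \sum_(l <- s) c l *: v l.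
Proof.
elim: s x => [|a s IHs] x /=.
  by move=> _; rewrite span_nil memv0 => /eqP ->; exists (fun=> 0); rewrite big_nil.
case/andP=> a_s uniq_s; rewrite span_cons => /memv_addP [y /vlineP [ca ->] [z zs ->]].
have [c ->] := IHs z uniq_s zs.
exists (fun l => if l == a then ca else c l); rewrite big_cons eqxx; congr (_ + _).
by apply: eq_big_seq => l ls; case: eqP ls a_s => [-> ->|].
Qed.

Lemma free_map_coef (s : seq I) : uniq s ->
  (forall c : I -> K, \sum_(l <- s) c l *: v l = 0 -> {in s, forall l, c l = 0}) ->
  free (map v s).
Proof.
elim: s => [|a s IHs] /=; first by rewrite /free span_nil dimv0.
case/andP=> a_s uniq_s coef0; rewrite free_cons; apply/andP; split.
  apply/negP => /(memv_span_map_sum uniq_s) [d va].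
  have := coef0 (fun l => if l == a then -1 else d l); rewrite big_cons eqxx.
  have -> : \sum_(l <- s) (if l == a then -1 else d l) *: v l = v a.
    by rewrite va; apply: eq_big_seq => l ls; case: eqP ls a_s => [-> ->|].
  by rewrite scaleN1r addNr => /(_ erefl a (mem_head _ _)) /eqP; rewrite eqxx oppr_eq0 oner_eq0.
apply: (IHs uniq_s) => c c0 l ls.
have := coef0 (fun m => if m == a then 0 else c m); rewrite big_cons eqxx scale0r add0r.
rewrite (eq_big_seq (fun m => c m *: v m)) => [/(_ c0 l) |m ms].
  by rewrite inE ls orbT; case: eqP ls a_s => [-> ->|_ _ _ ->].
by case: eqP ms a_s => [-> ->|].
Qed.

End SpanCoef.

Section Triangular.
Variables (R : idomainType) (I : eqType) (L : seq I) (M : I -> I -> R) (c : I -> R).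
Hypotheses (uniqL : uniq L) (M_diag : {in L, forall l, M l l != 0})
  (c_ker : {in L, forall m, \sum_(l <- L) c l * M l m = 0}).

Lemma triangular_coef0 (key : I -> nat) : {in L &, injective key} ->
  {in L &, forall l m, (key m < key l)%N -> M l m = 0} -> {in L, forall l, c l = 0}.
Proof.
move=> key_inj M_tri.
suff cN0 N : {in L, forall m, (key m < N)%N -> c m = 0} by move=> l lL; apply: (cN0 (key l).+1).
elim: N => [//|N IHN] m mL; rewrite ltnS => kmN.
have := c_ker mL; rewrite (bigD1_seq m) //= big1_seq ?addr0.
  by move/eqP; rewrite mulf_eq0 (negPf (M_diag mL)) orbF => /eqP.
move=> l /andP[lm lL]; case: (ltngtP (key l) (key m)) => [lt_lm|lt_ml|eq_lm].
- by rewrite (IHN l lL (leq_trans lt_lm kmN)) mul0r.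
- by rewrite M_tri ?mulr0.
- by rewrite (key_inj l m lL mL eq_lm) eqxx in lm.
Qed.

Lemma triangular_coef0_rev (key : I -> nat) : {in L &, injective key} ->
  {in L &, forall l m, (key l < key m)%N -> M l m = 0} -> {in L, forall l, c l = 0}.
Proof.
move=> key_inj M_tri; set top := (\max_(l <- L) key l)%N.
have key_top l : l \in L -> (key l <= top)%N by move=> lL; apply: leq_bigmax_seq.
apply: (@triangular_coef0 (fun l => top - key l)%N) => [l m lL mL /= eq_lm|l m lL mL /= lt_ml].
  by apply: key_inj => //; have := key_top l lL; have := key_top m mL; lia.
by apply: M_tri => //; have := key_top l lL; have := key_top m mL; lia.
Qed.

End Triangular.

Lemma eqn_mixed_radix (K x1 x2 y1 y2 : nat) : (x1 * K + y1 = x2 * K + y2)%N ->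
  (y1 < K)%N -> (y2 < K)%N -> x1 = x2 /\ y1 = y2.
Proof. by move=> eq_xy y1K y2K; have := edivn_eq x1 y1K; rewrite eq_xy edivn_eq // => -[]. Qed.

Lemma ltn_mixed_radix (K x1 x2 y1 y2 : nat) : (x1 * K + y1 < x2 * K + y2)%N ->
  (y1 < K)%N -> (y2 < K)%N -> (x1 < x2)%N \/ x1 = x2 /\ (y1 < y2)%N.
Proof.
move=> lt_xy y1K y2K; case: (ltngtP x1 x2) => [|lt_21|eq_12]; first by left.
  have : (x2.+1 * K <= x1 * K)%N by rewrite leq_mul2r lt_21 orbT.
  by rewrite mulSn; lia.
by right; rewrite eq_12 ltn_add2l in lt_xy.
Qed.

Section BilinearForm.
Variables (k : fieldType) (nn : nat).
Local Notation V := 'rV[k]_nn.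
Variables (B : V -> V -> k).

Lemma polar_form_sym (Q : V -> k) :
  (forall x y, B x y = Q (x + y) - Q x - Q y) -> forall x y, B x y = B y x.
Proof. by move=> BQ x y; rewrite !BQ (addrC y x) addrAC. Qed.

Hypothesis hB : bilinear_form B.

Lemma formDl x1 x2 y : B (x1 + x2) y = B x1 y + B x2 y.
Proof. by have := hB.1 1 x1 x2 y; rewrite scale1r mul1r. Qed.

Lemma formDr x y1 y2 : B x (y1 + y2) = B x y1 + B x y2.
Proof. by have := hB.2 1 x y1 y2; rewrite scale1r mul1r. Qed.

Lemma form0l y : B 0 y = 0.
Proof. by apply: (addrI (B 0 y)); rewrite -formDl !addr0. Qed.

Lemma form0r x : B x 0 = 0.
Proof. by apply: (addrI (B x 0)); rewrite -formDr !addr0. Qed.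

Lemma formZl a x y : B (a *: x) y = a * B x y.
Proof. by have := hB.1 a x 0 y; rewrite addr0 form0l addr0. Qed.

Lemma formZr a x y : B x (a *: y) = a * B x y.
Proof. by have := hB.2 a x y 0; rewrite addr0 form0r addr0. Qed.

Lemma form_suml (I : Type) (s : seq I) (c : I -> k) (v : I -> V) y :
  B (\sum_(l <- s) c l *: v l) y = \sum_(l <- s) c l * B (v l) y.
Proof.
elim: s => [|a s IHs]; first by rewrite !big_nil form0l.
by rewrite !big_cons formDl formZl IHs.
Qed.

Lemma form_sumr (I : Type) (s : seq I) (c : I -> k) (v : I -> V) x :
  B x (\sum_(l <- s) c l *: v l) = \sum_(l <- s) c l * B x (v l).
Proof.
elim: s => [|a s IHs]; first by rewrite !big_nil form0r.
by rewrite !big_cons formDr formZr IHs.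
Qed.

Lemma alternating_orth_sym :
  (forall x, B x x = 0) -> forall x y, B x y = 0 -> B y x = 0.
Proof.
move=> Balt x y Bxy; have := Balt (x + y).
by rewrite formDl !formDr !Balt Bxy add0r addr0 add0r.
Qed.

Section Hyperbolic.
Variables (I : eqType) (L : seq I) (a z : I -> V) (key : I -> nat).
Hypotheses (uniqL : uniq L) (key_inj : {in L &, injective key})
  (az_diag : {in L, forall l, B (a l) (z l) = 1})
  (az_tri : {in L &, forall l m, (key m < key l)%N -> B (a l) (z m) = 0})
  (zz0 : {in L &, forall l m, B (z l) (z m) = 0}).
Variables (cA cZ : I -> k) (y : V).
Hypothesis y_orth : {in L, forall m, B y (z m) = 0 /\ B (a m) y = 0}.
Let x := \sum_(l <- L) cA l *: a l + \sum_(l <- L) cZ l *: z l + y.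
Hypothesis x_orth : {in L, forall m, B x (z m) = 0 /\ B (a m) x = 0}.

Lemma hyperbolic_coef0 : {in L, forall l, cA l = 0 /\ cZ l = 0}.
Proof.
have cA0 : {in L, forall l, cA l = 0}.
  apply: (triangular_coef0 (M := fun l m => B (a l) (z m)) uniqL _ _ key_inj az_tri).
    by move=> l lL; rewrite az_diag ?oner_neq0.
  move=> m mL; have := (x_orth mL).1; rewrite /x !formDl !form_suml (y_orth mL).1 addr0.
  by rewrite [X in _ + X]big1_seq ?addr0 // => l /andP[_ lL]; rewrite zz0 ?mulr0.
have cZ0 : {in L, forall l, cZ l = 0}.
  apply: (triangular_coef0_rev (M := fun l m => B (a m) (z l)) uniqL _ _ key_inj).
  - by move=> l lL; rewrite az_diag ?oner_neq0.
  - move=> m mL; have := (x_orth mL).2; rewrite /x !formDr !form_sumr (y_orth mL).2 addr0.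
    by rewrite big1_seq ?add0r // => l /andP[_ lL]; rewrite cA0 ?mul0r.
  - by move=> l m lL mL; apply: az_tri.
by move=> l lL; rewrite cA0 ?cZ0.
Qed.

Lemma hyperbolic_orth_eq : x = y.
Proof.
rewrite /x !big1_seq ?add0r // => l /andP[_ /hyperbolic_coef0 [cA0 cZ0]].
  by rewrite cZ0 scale0r.
by rewrite cA0 scale0r.
Qed.

End Hyperbolic.
End BilinearForm.

Section AdaptedIndex.
Variables (p : nat -> nat) (sigma : nat).

Definition partner (l : nat * nat) : nat * nat := (l.1, l.2 + p l.1)%N.

Definition lower_idx : {pred nat * nat} := fun l => (1 <= l.1 <= sigma)%N && (l.2 < p l.1)%N.

(* The lexicographic rank by (i - p_t, -t), shifted by p_1 to avoid truncated subtraction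
   and written in base sigma.+1. *)
Definition pair_rank (l : nat * nat) : nat :=
  ((l.2 + p 1 - p l.1) * sigma.+1 + (sigma - l.1))%N.

Definition lower_seq (e f : nat) : seq (nat * nat) :=
  [seq (t, i) | t <- iota e ((minn f sigma).+1 - e), i <- iota 0 (p t)].

Definition W_index (e f : nat) : seq (nat * nat) :=
  lower_seq e f ++ map partner (lower_seq e f) ++
  (if f == sigma.+1 then [:: (sigma.+1, 0%N)] else [::]).

Lemma mem_lower_seq e f l :
  (l \in lower_seq e f) = (e <= l.1 <= minn f sigma)%N && (l.2 < p l.1)%N.
Proof.
by case: l => t i; rewrite mem_pair_allpairs !mem_iota /=; congr andb; apply/idP/idP; lia.
Qed.

Lemma lower_seq_sub e f : (1 <= e)%N -> {subset lower_seq e f <= lower_idx}.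
Proof.
by move=> e1 [t i]; rewrite mem_lower_seq /= => /andP[ht hi]; apply/andP; split=> //=; lia.
Qed.

Lemma uniq_lower_seq e f : uniq (lower_seq e f).
Proof.
by apply: allpairs_uniq_dep => [|t _|[t i] [r j] _ _ /= [-> ->]] //; exact: iota_uniq.
Qed.

Lemma partner_inj : injective partner.
Proof. by move=> [t i] [r j] [<-] /addIn ->. Qed.

Lemma mem_map_partner (L : seq (nat * nat)) l :
  (l \in map partner L) = (p l.1 <= l.2)%N && ((l.1, l.2 - p l.1)%N \in L).
Proof.
apply/mapP/andP => [[[t i] iL ->] | [le_p lL]] /=; first by rewrite addnK leq_addl.
by exists (l.1, l.2 - p l.1)%N; rewrite // /partner /= subnK //; case: l {lL le_p}.
Qed.

Lemma mem_W_index e f l : (1 <= e <= f)%N -> (f <= sigma.+1)%N ->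
  (l \in W_index e f) = (e <= l.1 <= f)%N && (l.2 < twop p sigma l.1)%N.
Proof.
move=> ef f_le; case: l => t i; rewrite /W_index !mem_cat mem_map_partner !mem_lower_seq /twop /=.
by case: eqP => [f_eq|f_ne]; rewrite ?inE ?in_nil ?xpair_eqE;
  case: (leqP t sigma) => ts; apply/idP/idP; lia.
Qed.

Lemma uniq_W_index e f : uniq (W_index e f).
Proof.
have lower_bd l : l \in lower_seq e f -> (l.1 <= sigma)%N && (l.2 < p l.1)%N.
  by rewrite mem_lower_seq => /andP[/andP[_ le_f] ->]; rewrite andbT (leq_trans le_f) ?geq_minr.
rewrite /W_index !cat_uniq uniq_lower_seq (map_inj_uniq partner_inj) uniq_lower_seq /=.
apply/and3P; split.
- apply/hasPn => l; rewrite mem_cat => /orP[/mapP[m /lower_bd /= + ->] | ].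
    by move=> m_bd; apply/negP => /lower_bd /=; lia.
  by case: eqP => // _; rewrite inE => /eqP ->; apply/negP => /lower_bd /=; lia.
- by case: eqP => //= _; rewrite orbF; apply/negP => /mapP[l /lower_bd /= + []]; lia.
- by case: eqP.
Qed.

Lemma size_W_index : size (W_index 1 sigma.+1) = (2 * \sum_(1 <= t < sigma.+1) p t + 1)%N.
Proof.
rewrite /W_index !size_cat size_map eqxx /= size_allpairs_dep (minn_idPr (leqnSn sigma)) subn1.
have -> : sumn [seq size (iota 0 (p t)) | t <- iota 1 sigma] = (\sum_(1 <= t < sigma.+1) p t)%N.
  by rewrite sumnE big_map /index_iota subn1; apply: eq_bigr => t _; rewrite size_iota.
lia.
Qed.

Hypothesis p_noninc : forall t, (1 <= t)%N -> (t < sigma)%N -> (p t.+1 <= p t)%N.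

Lemma p_noninc_le t r : (1 <= t <= r)%N -> (r <= sigma)%N -> (p r <= p t)%N.
Proof.
move=> /andP[t1 tr] rs.
apply: (homo_leq_in (D := [pred t | 1 <= t <= sigma]%N) (f := p) (r := fun a b => b <= a)%N) => //=.
- by move=> ? ? ? h1 h2; exact: leq_trans h2 h1.
- by move=> ? ? /andP[? ?] /andP[? ?] ? /andP[? ?]; apply/andP; lia.
- by move=> i /andP[i1 _] /andP[_ ?]; apply: p_noninc.
- by apply/andP; lia.
- by apply/andP; lia.
Qed.

Lemma p_le_p1 t : (1 <= t <= sigma)%N -> (p t <= p 1)%N.
Proof. by case/andP=> t1 ts; apply: p_noninc_le. Qed.

Lemma pair_rank_inj : {in lower_idx &, injective pair_rank}.
Proof.
move=> [t i] [r j] /andP[/= ht hi] /andP[/= hr hj] /eqn_mixed_radix.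
rewrite !ltnS !leq_subr => /(_ isT isT) [/= e_shift e_t].
have := p_le_p1 ht; have := p_le_p1 hr => pr1 pt1.
have etr : t = r by lia.
by subst r; congr (_, _); lia.
Qed.

End AdaptedIndex.

Section AdaptedSpan.
Variables (k : fieldType) (nn : nat) (p : nat -> nat) (sigma : nat) (w : nat -> int -> 'rV[k]_nn).

Definition wpair (l : nat * nat) : 'rV[k]_nn := w l.1 (Posz l.2).

Lemma W_ef_span_index e f : (1 <= e <= f)%N -> (f <= sigma.+1)%N ->
  W_ef p sigma w e f = <<map wpair (W_index p sigma e f)>>%VS.
Proof.
move=> ef f_le; rewrite /W_ef -(map_allpairs wpair pair); apply/eq_span/eq_mem_map => -[t i].
by rewrite mem_W_index // mem_pair_allpairs !mem_iota /=; congr andb; apply/idP/idP; lia.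
Qed.

Lemma sum_W_index e f (c : nat * nat -> k) :
  \sum_(l <- W_index p sigma e f) c l *: wpair l =
    \sum_(l <- lower_seq p sigma e f) c l *: wpair l
    + \sum_(l <- lower_seq p sigma e f) c (partner p l) *: wpair (partner p l)
    + (if f == sigma.+1 then c (sigma.+1, 0%N) *: w sigma.+1 0 else 0).
Proof. by rewrite /W_index !big_cat /= big_map addrA; case: eqP; rewrite ?big_seq1 ?big_nil. Qed.

Lemma u_in_W_ef e : (1 <= e <= sigma.+1)%N -> w sigma.+1 0 \in W_ef p sigma w e sigma.+1.
Proof.
move=> ef; rewrite W_ef_span_index //; apply/memv_span/(map_f wpair (x := (sigma.+1, 0%N))).
by rewrite mem_W_index //= /twop ltnn leqnn !andbT; case/andP: ef.
Qed.

End AdaptedSpan.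

Section AdaptedCollection.
Variables (k : fieldType) (nn : nat).
Local Notation V := 'rV[k]_nn.
Variables (B : V -> V -> k) (p : nat -> nat) (sigma kappa : nat) (w : nat -> int -> V).
Hypotheses (hB : bilinear_form B) (B_orth_sym : forall x y, B x y = 0 -> B y x = 0).
Hypothesis p_noninc : forall t, (1 <= t)%N -> (t < sigma)%N -> (p t.+1 <= p t)%N.
Hypothesis hb : forall t (i j : int), (1 <= t <= sigma)%N ->
  (`|i - j| < (p t)%:Z -> B (w t i) (w t j) = 0) /\ (j - i = (p t)%:Z -> B (w t i) (w t j) = 1).
Hypothesis hc : forall t r (i j : int), (1 <= t)%N -> (t < r)%N -> (r <= sigma)%N ->
  0 <= i - j + (p r)%:Z -> i - j + (p r)%:Z < (2 * p t)%:Z -> B (w t i) (w r j) = 0.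
Hypothesis he : kappa = 1%N -> forall t (i j : int), (1 <= t <= sigma)%N ->
  0 <= i - j -> i - j < (2 * p t)%:Z -> B (w t i) (w sigma.+1 j) = 0.

Local Notation u := (w sigma.+1 0).
Local Notation wv := (wpair w).
Local Notation zv l := (wpair w (partner p l)).
Local Notation lower := (lower_idx p sigma).
Local Notation rank := (pair_rank p sigma).

Lemma w_orth t r (i j : int) : (1 <= t <= sigma)%N -> (1 <= r <= sigma)%N ->
  ((t < r)%N -> (p r <= p t)%N -> 0 <= i - j + (p r)%:Z < (2 * p t)%:Z) ->
  ((r < t)%N -> (p t <= p r)%N -> 0 <= j - i + (p t)%:Z < (2 * p r)%:Z) ->
  (t = r -> `|i - j| < (p t)%:Z) -> B (w t i) (w r j) = 0.
Proof.
move=> ht hr lt_tr_range lt_rt_range eq_range; case: (ltngtP t r) => [lt_tr|lt_rt|eq_tr].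
- have prt : (p r <= p t)%N by apply: (p_noninc_le p_noninc); lia.
  by have /andP[? ?] := lt_tr_range lt_tr prt; apply: hc => //; lia.
- have ptr : (p t <= p r)%N by apply: (p_noninc_le p_noninc); lia.
  by have /andP[? ?] := lt_rt_range lt_rt ptr; apply/B_orth_sym/hc => //; lia.
- by subst r; apply: (hb _ _ ht).1; apply: eq_range.
Qed.

Lemma wpair_partner_tri :
  {in lower &, forall l m, (rank m < rank l)%N -> B (wv l) (zv m) = 0}.
Proof.
move=> [t i] [r j] /andP[/= ht hi] /andP[/= hr hj].
rewrite /pair_rank /= => /ltn_mixed_radix; rewrite !ltnS !leq_subr => /(_ isT isT) /= lt_rank.
have := p_le_p1 p_noninc ht; have := p_le_p1 p_noninc hr => pr1 pt1.
by rewrite /wpair /partner /=; apply: w_orth => // [? ?|? ?|eq_tr]; [lia | lia | subst r; lia].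
Qed.

Lemma wpair_partner_diag : {in lower, forall l, B (wv l) (zv l) = 1}.
Proof.
by move=> [t i] /andP[/= ht _]; apply: (hb _ _ ht).2; rewrite /= PoszD addrAC subrr add0r.
Qed.

Lemma partner_orth : {in lower &, forall l m, B (zv l) (zv m) = 0}.
Proof.
move=> [t i] [r j] /andP[/= ht hi] /andP[/= hr hj]; rewrite /wpair /partner /=.
by apply: w_orth => // [? ?|? ?|eq_tr]; [lia | lia | subst r; lia].
Qed.

Lemma w_orth_u t (i : nat) : kappa = 1%N -> (1 <= t <= sigma)%N -> (i < 2 * p t)%N ->
  B (w t i) u = 0 /\ B u (w t i) = 0.
Proof.
move=> k1 ht hi; have w_u : B (w t i) u = 0 by apply: he => //; lia.
by split=> //; apply: B_orth_sym.
Qed.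

Lemma scale_u_orth c : kappa = 1%N ->
  {in lower, forall m, B (c *: u) (zv m) = 0 /\ B (wv m) (c *: u) = 0}.
Proof.
move=> k1 [t i] /andP[/= ht hi]; rewrite (formZl hB) (formZr hB).
have [_ uz] := @w_orth_u t (i + p t) k1 ht ltac:(lia).
have [au _] := @w_orth_u t i k1 ht ltac:(lia).
by rewrite uz au !mulr0.
Qed.

Lemma W_ef_radical_line e f x : (1 <= e <= f)%N -> (f <= sigma + kappa)%N -> (kappa <= 1)%N ->
  x \in W_ef p sigma w e f -> (forall y, y \in W_ef p sigma w e f -> B x y = 0) ->
  exists c, x = if f == sigma.+1 then c *: u else 0.
Proof.
move=> ef f_le k_le; have f_le' : (f <= sigma.+1)%N by lia.
have sub_lower := @lower_seq_sub p sigma e f (proj1 (andP ef)); rewrite W_ef_span_index //.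
have inW l : l \in W_index p sigma e f -> wv l \in <<map wv (W_index p sigma e f)>>%VS.
  by move=> lL; rewrite memv_span ?map_f.
move=> /(memv_span_map_sum (uniq_W_index p sigma e f)) [c ->] x_orth.
rewrite sum_W_index in x_orth *; exists (c (sigma.+1, 0%N)).
apply: (@hyperbolic_orth_eq _ _ _ hB _ _ wv (fun l => zv l) rank (uniq_lower_seq p sigma e f)
  (sub_in2 sub_lower (pair_rank_inj p_noninc)) (sub_in1 sub_lower wpair_partner_diag)
  (sub_in2 sub_lower wpair_partner_tri) (sub_in2 sub_lower partner_orth)) => m mL.
  case: eqP => [f_eq|_]; last by rewrite (form0l hB) (form0r hB).
  by apply: scale_u_orth; [lia | exact: sub_lower].
split; [apply: x_orth | apply: B_orth_sym; apply: x_orth]; apply: inW.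
  by rewrite !mem_cat map_f ?orbT.
by rewrite mem_cat mL.
Qed.

Lemma free_W_index : kappa = 1%N -> u != 0 -> free (map wv (W_index p sigma 1 sigma.+1)).
Proof.
move=> k1 u0; apply: free_map_coef (uniq_W_index p sigma 1 sigma.+1) _ => c.
rewrite sum_W_index eqxx => sum0; have sub_lower := @lower_seq_sub p sigma 1 sigma.+1 isT.
have coef0 : {in lower_seq p sigma 1 sigma.+1, forall l, c l = 0 /\ c (partner p l) = 0}.
  apply: (@hyperbolic_coef0 _ _ _ hB _ _ wv (fun l => zv l) rank
    (uniq_lower_seq p sigma 1 sigma.+1) (sub_in2 sub_lower (pair_rank_inj p_noninc))
    (sub_in1 sub_lower wpair_partner_diag) (sub_in2 sub_lower wpair_partner_tri)
    (sub_in2 sub_lower partner_orth) _ _ (c (sigma.+1, 0%N) *: u)) => m mL.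
    exact: scale_u_orth k1 _ (sub_lower m mL).
  by rewrite sum0 (form0l hB) (form0r hB).
have cu0 : c (sigma.+1, 0%N) = 0.
  have sumA0 : \sum_(l <- lower_seq p sigma 1 sigma.+1) c l *: wv l = 0.
    by apply: big1_seq => l /andP[_ /coef0[-> _]]; rewrite scale0r.
  have sumZ0 : \sum_(l <- lower_seq p sigma 1 sigma.+1) c (partner p l) *: zv l = 0.
    by apply: big1_seq => l /andP[_ /coef0[_ ->]]; rewrite scale0r.
  move: sum0; rewrite sumA0 sumZ0 !add0r => /eqP.
  by rewrite scaler_eq0 (negPf u0) orbF => /eqP.
move=> l; rewrite !mem_cat => /or3P[/coef0[] // | /mapP[m /coef0[_ +] ->] // |].
by rewrite eqxx inE => /eqP ->.
Qed.

Lemma u_in_perp : kappa = 1%N -> u != 0 -> B u u = 0 ->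
  nn = (2 * \sum_(1 <= t < sigma.+1) p t + 1)%N -> in_perp B u.
Proof.
move=> k1 u0 uu0 nn_eq y.
have span_full : <<map wv (W_index p sigma 1 sigma.+1)>>%VS = fullv.
  apply/eqP; rewrite eqEdim subvf dimvf /dim /= mul1n.
  by have /eqP -> := free_W_index k1 u0; rewrite size_map size_W_index nn_eq.
have := memvf y; rewrite -span_full.
move=> /(memv_span_map_sum (uniq_W_index p sigma 1 sigma.+1)) [c ->].
rewrite (form_sumr hB) big1_seq // => -[t i] /andP[_]; rewrite mem_W_index // /twop /=.
case/andP=> ht; case: ifP => ts hi.
  by have [_ ->] := @w_orth_u t i k1 ltac:(lia) hi; rewrite mulr0.
have [-> ->] : t = sigma.+1 /\ i = 0%N by lia.
by rewrite /wpair uu0 mulr0.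
Qed.

End AdaptedCollection.

Lemma quadratic_form0 (k : fieldType) (nn : nat) (Q : 'rV[k]_nn -> k) :
  quadratic_form Q -> Q 0 = 0.
Proof. by case=> QZ _; rewrite -(scale0r 0) QZ expr0n mul0r. Qed.

Lemma closed_sqrt (k : closedFieldType) (x : k) : exists a, a ^+ 2 = x.
Proof.
have [a a2] := @solve_monicpoly k 2 (fun i => if i == 0%N then x else 0) isT.
by exists a; rewrite a2 big_ord_recr big_ord1 /= mul0r addr0 mulr1.
Qed.

Theorem mainTheorem4 (k : closedFieldType) (nn n kappa : nat)
  (B : 'rV[k]_nn -> 'rV[k]_nn -> k) (Q : 'rV[k]_nn -> k)
  (hnn : (3 <= nn)%N) (hkappa : (kappa <= 1)%N) (hn : nn = (2 * n + kappa)%N)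
  (hB : bilinear_form B) (hQ : quadratic_form Q)
  (hcases :
     ((forall x, Q x = 0) /\ (forall x, B x x = 0) /\
        (forall x, in_perp B x -> x = 0))
     \/
     ((exists x, Q x != 0) /\ (forall x y, B x y = Q (x + y) - Q x - Q y) /\
        (forall x y, in_perp B x -> in_perp B y -> Q x = Q y -> x = y)))
  (sigma : nat) (p : nat -> nat)
  (hp1 : forall t, (1 <= t <= sigma)%N -> (1 <= p t)%N)
  (hpmono : forall t, (1 <= t)%N -> (t < sigma)%N -> (p t.+1 <= p t)%N)
  (hpsum : (\sum_(1 <= t < sigma.+1) p t)%N = n)
  (g : {linear 'rV[k]_nn -> 'rV[k]_nn}) (hg : is_isometry B Q g)
  (w : nat -> int -> 'rV[k]_nn) (hw : adapted B Q g p sigma kappa w)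
  (e f : nat) (hef : (1 <= e <= f)%N) (hf : (f <= sigma + kappa)%N)
  (hstable : forall x, x \in W_ef p sigma w e f -> g x \in W_ef p sigma w e f) :
  let rad x := x \in W_ef p sigma w e f /\
               (forall y, y \in W_ef p sigma w e f -> B x y = 0) in
  if [&& kappa == 1%N, f == sigma.+1 & 2%N \in [pchar k]]
  then forall x, rad x <-> in_perp B x
  else forall x, rad x -> x = 0.
Proof.
move=> rad; have [_ [hb [hc [hd [he [_ hQu]]]]]] := hw; set u := w sigma.+1 0.
have B_orth_sym : forall x y, B x y = 0 -> B y x = 0.
  case: hcases => [[_ [Balt _]] | [_ [BQ _]]]; first exact: alternating_orth_sym.
  by move=> x y; rewrite (polar_form_sym BQ).
have radW := W_ef_radical_line hB B_orth_sym hpmono hb hc he hef hf hkappa.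
have uW : f = sigma.+1 -> u \in W_ef p sigma w e f by move=> f_eq; rewrite f_eq u_in_W_ef // -f_eq.
case: ifP => [/and3P[/eqP k1 /eqP f_eq char2] | not_char2] x.
- have Q_inj : forall x y, in_perp B x -> in_perp B y -> Q x = Q y -> x = y.
    case: hcases => [[Q0 _] | [_ [_ //]]]; have := hQu k1 0.
    by rewrite Q0 => /eqP; rewrite eq_sym oner_eq0.
  have u0 : u != 0.
    apply/eqP => u_eq0; move: (hQu k1 0).
    by rewrite -/u u_eq0 quadratic_form0 // => /eqP; rewrite eq_sym oner_eq0.
  have u_perp : in_perp B u.
    apply: (u_in_perp hB B_orth_sym hpmono hb hc he k1 u0); last by rewrite hn hpsum k1.
    by rewrite hd; move: char2; rewrite inE => /andP[_ /eqP].
  have Zu_perp a : in_perp B (a *: u) by move=> y; rewrite (formZl hB) u_perp mulr0.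
  split=> [[xW /(radW _ xW)] | x_perp]; first by rewrite f_eq eqxx => -[c ->].
  have [a a2] := closed_sqrt (Q x).
  have -> : x = a *: u by apply: Q_inj => //; rewrite hQ.1 (hQu k1 0) mulr1 a2.
  by split=> [|y _]; [apply/memvZ/uW | apply: Zu_perp].
- case=> xW x_orth; have [c] := radW _ xW x_orth; case: eqP => [f_eq|_ //] x_eq.
  have k1 : kappa = 1%N by lia.
  have two_neq0 : 2%:R != 0 :> k by move: not_char2; rewrite k1 f_eq !eqxx inE /= => /negbT.
  move: (x_orth _ (uW f_eq)); rewrite x_eq (formZl hB) (hd k1 0) => /eqP.
  by rewrite mulf_eq0 (negPf two_neq0) orbF => /eqP ->; rewrite scale0r.
Qed.
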